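(* Let $T\ge1$ and let $d_1,\dots,d_T\in\{0,1,2,\dots\}$ satisfy $t+d_t\le T$ for all $t\in[T]$. For $t\in[T]$ let $m_t=\{\tau\in[t-1]:\tau+d_\tau\ge t\}$ and $\sigma_{\max}=\max_{t\in[T]}|m_t|$. For $S\subseteq[T]$ let $d_{\mathrm{tot}}(S)=\sum_{\tau\in S}d_\tau$ and $\bar S=[T]\setminus S$. Then $$\sigma_{\max}\le2\sqrt2\min_{S\subseteq[T]}\left(|S|+\sqrt{d_{\mathrm{tot}}(\bar S)}\right).$$
   Context: $[k]=\{1,\dots,k\}$, $[0]=\emptyset$. The set $m_t$ consists of the rounds before $t$ whose feedback (revealed at the end of round $\tau+d_\tau$) has not been received before round $t$. *)

From mathcomp Require Import all_boot all_order all_algebra.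
Set Implicit Arguments. Unset Strict Implicit. Unset Printing Implicit Defensive.
Import Order.TTheory GRing.Theory Num.Theory.

(* Convention: round t in [T] = {1..T} is represented by i : 'I_T with t = i+1.
   d i is the delay d_t of round t = i+1. *)

Definition missing (T : nat) (d : 'I_T -> nat) (i : 'I_T) : {set 'I_T} :=
  [set j : 'I_T | (j < i)%N && (i.+1 <= j.+1 + d j)%N].

Definition sigma_max (T : nat) (d : 'I_T -> nat) : nat :=
  \max_(i : 'I_T) #|missing d i|.

Definition dtot (T : nat) (d : 'I_T -> nat) (S : {set 'I_T}) : nat :=
  \sum_(j in S) d j.

From mathcomp Require Import all_boot all_order all_algebra.
From mathcomp Require Import zify lra.
Import Order.TTheory GRing.Theory Num.Theory.

(* Let round t attain sigma_max and let k be the number of rounds of m_t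
   outside S. These are k distinct rounds tau < t whose delays satisfy
   d_tau >= t - tau, so their delays dominate 1, 2, ..., k and
   d_tot(~S) >= k (k + 1) / 2 >= k^2 / 2. Hence
   |m_t| <= |S| + k <= |S| + sqrt 2 * sqrt (d_tot(~S)), which is even better
   than the claimed bound. *)

Lemma bin2_size_le_sumn (s : seq nat) : uniq s -> 'C(size s, 2) <= sumn s.
Proof.
suff bounded n : all (gtn n) s -> uniq s -> 'C(size s, 2) <= sumn s.
  apply: (bounded (\max_(x <- s) x).+1); apply/allP => x x_in.
  by rewrite /= ltnS (leq_bigmax_seq x x_in).
elim: n s => [|n IHn] s s_lt uniq_s; first by case: s s_lt uniq_s.
have lt_n x : x \in s -> x != n -> x < n.
  by move=> x_in x_neq; rewrite ltn_neqAle x_neq -ltnS; exact: (allP s_lt).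
have [n_in | n_notin] := boolP (n \in s); last first.
  apply: IHn uniq_s; apply/allP => x x_in.
  by apply: lt_n => //; apply: contraNneq n_notin => <-.
have uniq_r := rem_uniq n uniq_s.
have r_lt : all (gtn n) (rem n s).
  apply/allP => x; rewrite (mem_rem_uniq _ uniq_s) inE => /andP[x_neq x_in].
  exact: lt_n.
have size_r : size (rem n s) <= n.
  rewrite -[X in _ <= X](size_iota 0); apply: uniq_leq_size uniq_r _ => x x_in.
  by rewrite mem_iota add0n; exact: (allP r_lt).
rewrite (perm_size (perm_to_rem n_in)) (perm_sumn (perm_to_rem n_in)) /=.
by rewrite binS bin1 addnC leq_add // IHn.
Qed.

Lemma bin2_card_le_sum_inj (I : finType) (A : {pred I}) (f : I -> nat) :
  {in A &, injective f} -> 'C(#|A|, 2) <= \sum_(i in A) f i.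
Proof.
move=> f_inj; have := @bin2_size_le_sumn [seq f i | i <- enum A].
rewrite size_map -cardE sumnE big_map big_enum; apply.
rewrite map_inj_in_uniq ?enum_uniq // => i j.
by rewrite !mem_enum; apply: f_inj.
Qed.

Lemma leq_sqr_bin2S k : k * k <= 'C(k.+1, 2) * 2.
Proof.
rewrite -[X in _ <= _ * X]/(2`!) bin_ffact ffactnS ffactn1 /=.
by rewrite mulnC leq_mul2l leqnSn orbT.
Qed.

Section Delays.

Variables (T : nat) (d : 'I_T -> nat).

Lemma dtot_subset (A B : {set 'I_T}) : A \subset B -> dtot d A <= dtot d B.
Proof.
by move=> sAB; rewrite [X in _ <= X](big_setID A) /= (setIidPr sAB) leq_addr.
Qed.

Lemma bin2_card_le_dtot_missing (i : 'I_T) (A : {set 'I_T}) :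
  A \subset missing d i -> 'C(#|A|.+1, 2) <= dtot d A.
Proof.
move=> /subsetP sAM.
have missingP j : j \in A -> j < i /\ i - j.+1 < d j.
  by move=> /sAM; rewrite inE => /andP[j_lt_i late]; split; lia.
rewrite binS bin1 -[X in _ + X]sum1_card.
apply: leq_trans (_ : _ <= \sum_(j in A) (i - j.+1) + \sum_(j in A) 1) _.
  rewrite leq_add2r; apply: bin2_card_le_sum_inj => j k /missingP[j_lt _].
  by move=> /missingP[k_lt _] eq_jk; apply: ord_inj; lia.
by rewrite -big_split /=; apply: leq_sum => j /missingP[_]; rewrite addn1.
Qed.

Lemma sqr_card_missingD_le_dtot (i : 'I_T) (S : {set 'I_T}) :
  #|missing d i :\: S| * #|missing d i :\: S| <= 2 * dtot d (~: S).
Proof.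
apply: leq_trans (leq_sqr_bin2S _) _; rewrite mulnC leq_mul2l /=.
apply: leq_trans (bin2_card_le_dtot_missing i _ (subsetDl _ S)) _.
by apply: dtot_subset; rewrite setDE subsetIr.
Qed.

Lemma sigma_max_attained : 0 < T -> exists i, sigma_max d = #|missing d i|.
Proof.
move=> T_gt0; have card_gt0 : 0 < #|'I_T| by rewrite card_ord.
rewrite /sigma_max.
by have [i ->] := bigop.eq_bigmax (fun i => #|missing d i|) card_gt0; exists i.
Qed.

End Delays.

Local Open Scope ring_scope.

Lemma nat_le_sqrt2_sqrt (R : rcfType) (k D : nat) :
  (k * k <= 2 * D)%N -> (k%:R : R) <= Num.sqrt 2 * Num.sqrt D%:R.
Proof.
move=> kk_le; rewrite -sqrtrM ?ler0n // -[leLHS]ger0_norm ?ler0n // -sqrtr_sqr.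
by rewrite ler_sqrt ?mulr_ge0 ?ler0n // -natrX -natrM ler_nat expnS expn1.
Qed.

Theorem lemmaA7 (R : rcfType) (T : nat) (hT : (1 <= T)%N) (d : 'I_T -> nat)
  (hd : forall i : 'I_T, (i.+1 + d i <= T)%N) :
  forall S : {set 'I_T},
    (sigma_max d)%:R <= 2 * Num.sqrt 2 *
      ((#|S|)%:R + Num.sqrt ((dtot d (~: S))%:R) : R).
Proof.
move=> S; have [i ->] := sigma_max_attained T d hT.
set k := #|missing d i :\: S|; set D := dtot d (~: S).
have card_missing_le : (#|missing d i| <= #|S| + k)%N.
  by rewrite -(cardsID S (missing d i)) leq_add2r subset_leq_card ?subsetIr.
have k_le : (k%:R : R) <= Num.sqrt 2 * Num.sqrt D%:R.
  exact/nat_le_sqrt2_sqrt/sqr_card_missingD_le_dtot.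
apply: le_trans (_ : #|S|%:R + Num.sqrt 2 * Num.sqrt D%:R <= _).
  apply: le_trans (_ : (#|S| + k)%:R <= _); first by rewrite ler_nat.
  by rewrite natrD lerD2l.
have sqrt2_ge1 : 1 <= Num.sqrt (2 : R) by rewrite -{1}sqrtr1 ler_sqrt ?ler1n.
have := sqrtr_ge0 (D%:R : R); have := ler0n R #|S|; nra.
Qed.
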